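(* Let $\gamma,\delta$ be positive integers, let $\varphi_{\gamma,\delta}(z)=(1+z)^{\gamma}(1+z^{-1})^{\delta}$, let $\mu$ be a partition of length $M=l(\mu)$, and let $N\ge M$. Then $$D_N^{\varnothing,\mu}(\varphi_{\gamma,\delta})=D_N(\varphi_{\gamma,\delta})\,\frac{G(N-M+1)}{G(N+1)}\,\frac{G(\delta+N+1)}{G(\delta+N-M+1)}\,s_{\mu'}(1^{\gamma})\prod_{k=1}^{M}\frac{(\mu_k+N-k)!}{(\delta+\mu_k+N-k)!}.$$
   Context: For a Laurent polynomial $f(z)=\sum_kd_kz^k$, $D_N(f)=\det(d_{j-k})_{j,k=1}^N$ and $D_N^{\varnothing,\mu}(f)=\det(d_{j-k+\mu_k})_{j,k=1}^N$, with $\mu_k=0$ for $k>l(\mu)$. Here $d_k=\binom{\gamma+\delta}{\delta+k}$ for $-\delta\le k\le\gamma$ and $0$ otherwise. $\mu'$ is the conjugate partition, and $s_{\mu'}(1^\gamma)$ is the Schur polynomial evaluated at $\gamma$ variables equal to $1$. $G$ is the Barnes $G$-function ($G(1)=1$, $G(z+1)=\Gamma(z)G(z)$). *)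

From mathcomp Require Import all_boot all_order all_algebra.
Set Implicit Arguments. Unset Strict Implicit. Unset Printing Implicit Defensive.
Import Order.TTheory GRing.Theory Num.Theory.
Local Open Scope ring_scope.

Definition is_partition (mu : seq nat) : bool :=
  sorted geq mu && all (fun p => 0 < p)%N mu.

Definition conj_part (mu : seq nat) : seq nat :=
  [seq count (fun p => j < p)%N mu | j <- iota 0 (head 0%N mu)].

(* Semistandard Young tableaux of shape lam with entries in {1..n}:
   encoded as T : 'I_(l(lam)) * 'I_(lam_1) -> option 'I_n, value None meaning
   "cell (i,j) is not in the Young diagram", value Some e the entry e+1. *)
Definition in_shape (lam : seq nat) (i j : nat) : bool := (j < nth 0 lam i)%N.

Definition cells (lam : seq nat) := ('I_(size lam) * 'I_(head 0%N lam))%type.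

Definition entry (n : nat) (o : option 'I_n) : nat :=
  if o is Some e then (e : nat) else 0%N.

Definition is_ssyt (n : nat) (lam : seq nat)
  (T : {ffun cells lam -> option 'I_n}) : bool :=
  [forall c : cells lam, (T c != None) == in_shape lam c.1 c.2] &&
  [forall c : cells lam, forall c' : cells lam,
     (in_shape lam c.1 c.2 && in_shape lam c'.1 c'.2) ==>
     ((((c.1 : nat) == c'.1) && (c'.2 == (c.2).+1 :> nat)) ==>
        (entry (T c) <= entry (T c'))%N) &&
     ((((c.2 : nat) == c'.2) && (c'.1 == (c.1).+1 :> nat)) ==>
        (entry (T c) < entry (T c'))%N)].

Definition schur (R : comPzRingType) (n : nat) (lam : seq nat) (x : 'I_n -> R) : R :=
  \sum_(T : {ffun cells lam -> option 'I_n} | is_ssyt T)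
    \prod_(c : cells lam) (if T c is Some e then x e else 1).

(* Barnes G-function at positive integers: G(1)=1, G(n+1) = Gamma(n) G(n) = (n-1)! G(n),
   i.e. G(n) = prod_{i=0}^{n-2} i!. (Only used at positive integer arguments.) *)
Definition barnesG (n : nat) : nat := \prod_(i < n.-1) i`!.

(* Fourier coefficients d_k of phi_{gamma,delta}(z) = (1+z)^gamma (1+1/z)^delta. *)
Definition phi_coef (gamma delta : nat) (k : int) : rat :=
  if ((- (delta%:Z) <= k) && (k <= gamma%:Z)) then ('C(gamma + delta, absz (delta%:Z + k)))%:R
  else 0.

Definition toeplitzD (N : nat) (d : int -> rat) : rat :=
  \det (\matrix_(j < N, k < N) d (j%:Z - k%:Z)).

(* D_N^{empty,mu}(f) = det(d_{j-k+mu_k})_{j,k=1}^N, mu_k = 0 for k > l(mu).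
   With 0-based indices j,k, mu_{k+1} = nth 0 mu k. *)
Definition toeplitzD_mu (N : nat) (mu : seq nat) (d : int -> rat) : rat :=
  \det (\matrix_(j < N, k < N) d (j%:Z - k%:Z + (nth 0%N mu k)%:Z)).

(* The Toeplitz matrix of phi_{gamma,delta} has entries C(gamma + delta, delta + j - k + mu_k):
   it is the binomial matrix [C(n, u_k - (N-1-j))] with n = gamma + delta and strictly
   decreasing exponents u_k = delta + mu_k + N-1-k.  As C(n, u - s) u! (n+N-1-u)! is n! times
   the polynomial u^(s) (n+N-1-u)^(N-1-s) of degree < N in u, such a matrix is a column rescaling
   of a constant matrix times a Vandermonde matrix, so its determinant is a constant c(n, N)
   times prod_{i<j} (u_j - u_i) / prod_k u_k! (n+N-1-u_k)!.
   By the dual Jacobi-Trudi identity, s_{mu'}(1^gamma) is a binomial determinant of the same kind,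
   with n = gamma and l(mu) columns; this is proved by matching the Pascal-rule recursion of the
   determinant in gamma with the recursion on semistandard tableaux that deletes the largest
   entries, which form a horizontal strip.
   Comparing the product formulas at mu and at the empty partition, the columns beyond l(mu)
   cancel, and the cross terms give factorial ratios that make up the Barnes G quotient and
   prod_k (mu_k+N-k)! / (delta+mu_k+N-k)!. *)

From mathcomp Require Import all_boot all_order all_algebra.
From mathcomp Require Import perm zify ring.
Import Order.TTheory GRing.Theory Num.Theory.

Set Implicit Arguments. Unset Strict Implicit. Unset Printing Implicit Defensive.

(** * Semistandard tableaux with prescribed column heights *)

Section ColumnTableaux.
Variables (R C : nat).
Implicit Types (f : 'I_C -> nat) (t : {ffun 'I_C -> bool}) (x : 'I_R * 'I_C).
Local Notation tableau n := {ffun 'I_R * 'I_C -> option 'I_n}.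

Definition ssyt_on n (sh : 'I_R -> 'I_C -> bool) (T : tableau n) :=
  [forall c, (T c != None) == sh c.1 c.2] &&
  [forall c, forall c',
     (sh c.1 c.2 && sh c'.1 c'.2) ==>
     ((((c.1 : nat) == c'.1) && (c'.2 == (c.2).+1 :> nat)) ==>
        (entry (T c) <= entry (T c'))%N) &&
     ((((c.2 : nat) == c'.2) && (c'.1 == (c.1).+1 :> nat)) ==>
        (entry (T c) < entry (T c'))%N)].

Lemma ssyt_onP n sh (T : tableau n) :
  reflect [/\ forall x, (T x != None) = sh x.1 x.2,
     (forall x y, sh x.1 x.2 -> sh y.1 y.2 -> x.1 = y.1 :> nat -> y.2 = (x.2).+1 :> nat ->
        entry (T x) <= entry (T y)) &
     (forall x y, sh x.1 x.2 -> sh y.1 y.2 -> x.2 = y.2 :> nat -> y.1 = (x.1).+1 :> nat ->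
        entry (T x) < entry (T y))]
   (ssyt_on sh T).
Proof.
apply: (iffP andP) => [[/forallP Hsh /forallP Hord]|[Hsh Hrow Hcol]]; split.
- by move=> x; move: (Hsh x) => /eqP.
- move=> x y hx hy e1 e2; have /forallP/(_ y) := Hord x.
  by rewrite hx hy e1 e2 !eqxx /= => /andP[].
- move=> x y hx hy e1 e2; have /forallP/(_ y) := Hord x.
  by rewrite hx hy e1 e2 !eqxx /= => /andP[].
- by apply/forallP => x; rewrite Hsh.
- apply/forallP => x; apply/forallP => y; apply/implyP => /andP[hx hy].
  by apply/andP; split; apply/implyP => /andP[/eqP e1 /eqP e2]; [apply: Hrow | apply: Hcol].
Qed.

Lemma eq_ssyt_on n sh1 sh2 (T : tableau n) :
  sh1 =2 sh2 -> ssyt_on sh1 T = ssyt_on sh2 T.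
Proof.
move=> e; rewrite /ssyt_on; congr (_ && _); apply: eq_forallb => c; first by rewrite e.
by apply: eq_forallb => c'; rewrite !e.
Qed.

Definition col_shape f i j := (i < f j)%N.

Definition ssyts n f := [set T : tableau n | ssyt_on (col_shape f) T].

Lemma eq_ssyts n f g : f =1 g -> ssyts n f = ssyts n g.
Proof.
by move=> e; apply/setP => T; rewrite !inE; apply: eq_ssyt_on => i j; rewrite /col_shape e.
Qed.

Definition stepwise (r : rel nat) f :=
  [forall k : 'I_C, forall k' : 'I_C, (k' == k.+1 :> nat) ==> r (f k') (f k)].

Lemma stepwiseP (r : rel nat) f :
  reflect (forall k k' : 'I_C, k' = k.+1 :> nat -> r (f k') (f k)) (stepwise r f).
Proof.
apply: (iffP forallP) => [H k k' e|H k]; last first.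
  by apply/forallP => k'; apply/implyP => /eqP; apply: H.
by move/forallP: (H k) => /(_ k') /implyP; apply; apply/eqP.
Qed.

Definition shrink f t j := (f j - t j)%N.

Definition strip_ok f t := [forall k, t k ==> (0 < f k)%N] && stepwise leq (shrink f t).

Definition max_cols n (T : tableau n.+1) : {ffun 'I_C -> bool} :=
  [ffun j => [exists i, T (i, j) == Some ord_max]].

Definition drop_max n (T : tableau n.+1) : tableau n :=
  [ffun x => obind (unlift ord_max) (T x)].

Definition add_max n f (T : tableau n) : tableau n.+1 :=
  [ffun x => if T x is Some e then Some (lift ord_max e)
             else if (x.1 < f x.2)%N then Some ord_max else None].

Lemma entry_lift n (e : 'I_n) : entry (Some (lift ord_max e)) = e.
Proof. by rewrite /= /bump leqNgt ltn_ord. Qed.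

Lemma entry_le n (o : option 'I_n.+1) : (entry o <= n)%N.
Proof. by case: o => [e|] //=; rewrite -ltnS. Qed.

Lemma entry_max n (o : option 'I_n.+1) : o != None -> entry o = n -> o = Some ord_max.
Proof. by case: o => [e|] //= _ he; congr Some; apply: val_inj. Qed.

Variables (n : nat) (f : 'I_C -> nat).
Hypothesis f_le_R : forall j, (f j <= R)%N.
Hypothesis f_nonincr : stepwise leq f.

Lemma max_entry_bottom (T : tableau n.+1) x :
  ssyt_on (col_shape f) T -> T x = Some ord_max -> (x.1).+1 = f x.2.
Proof.
case/ssyt_onP => Hsh _ Hcol Tx.
have sx : col_shape f x.1 x.2 by rewrite -Hsh Tx.
case: (ltngtP (x.1).+1 (f x.2)) => [lt2|gt|//]; last by move: sx; rewrite /col_shape; lia.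
have lty : ((x.1).+1 < R)%N by apply: leq_trans lt2 (f_le_R _).
have := Hcol x (Ordinal lty, x.2) sx lt2 erefl erefl.
by rewrite Tx /= ltnNge entry_le.
Qed.

Lemma max_entryE (T : tableau n.+1) x :
  ssyt_on (col_shape f) T -> col_shape f x.1 x.2 ->
  (T x == Some ord_max) = max_cols T x.2 && ((x.1).+1 == f x.2).
Proof.
move=> HT sx; apply/eqP/andP => [Tx|[]].
  split; last by apply/eqP; apply: max_entry_bottom Tx.
  by rewrite ffunE; apply/existsP; exists x.1; rewrite -surjective_pairing Tx.
rewrite ffunE => /existsP[i /eqP Ti] /eqP e.
have := max_entry_bottom HT Ti => /= e2.
have -> : x = (i, x.2) by rewrite [x]surjective_pairing; congr pair; apply: val_inj => /=; lia.
exact: Ti.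
Qed.

Lemma drop_max_none (T : tableau n.+1) x :
  (drop_max T x != None) = (T x != None) && (T x != Some ord_max).
Proof.
rewrite ffunE; case: (T x) => [e|] //=; case: unliftP => [j ->|->] /=; last by rewrite eqxx.
by rewrite eq_sym neq_lift.
Qed.

Lemma drop_max_entry (T : tableau n.+1) x :
  T x != Some ord_max -> entry (drop_max T x) = entry (T x).
Proof.
rewrite ffunE; case: (T x) => [e|] //= ne; case: unliftP => [j ->|e_max] /=.
  by rewrite /bump leqNgt ltn_ord.
by rewrite e_max eqxx in ne.
Qed.

Lemma strip_ok_max_cols (T : tableau n.+1) :
  ssyt_on (col_shape f) T -> strip_ok f (max_cols T).
Proof.
move=> HT; move: (HT) => /ssyt_onP [Hsh Hrow _].
apply/andP; split.
  apply/forallP => k; apply/implyP; rewrite ffunE => /existsP [i /eqP Ti].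
  have : col_shape f i k by rewrite -(Hsh (i, k)) Ti.
  by rewrite /col_shape; lia.
apply/stepwiseP => k k' e; rewrite /shrink.
move/stepwiseP: f_nonincr => /(_ k k' e) fle.
case: (ltngtP (f k') (f k)) => [lt|gt|eqf].
    by case: (max_cols T k'); case: (max_cols T k); lia.
  by lia.
case tk: (max_cols T k); last by case: (max_cols T k'); lia.
suff -> : max_cols T k' = true by lia.
move: tk; rewrite !ffunE => /existsP [i /eqP Ti].
have /= bottom := max_entry_bottom HT Ti.
apply/existsP; exists i.
have sy : col_shape f i k' by rewrite /col_shape eqf -bottom.
have sx : col_shape f i k by rewrite /col_shape -bottom.
have := Hrow (i, k) (i, k') sx sy erefl e; rewrite Ti /= => le.
apply/eqP; apply: entry_max; first by rewrite Hsh.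
by apply/eqP; rewrite eqn_leq entry_le.
Qed.

Lemma drop_max_ssyt (T : tableau n.+1) :
  ssyt_on (col_shape f) T -> ssyt_on (col_shape (shrink f (max_cols T))) (drop_max T).
Proof.
move=> HT; move: (HT) => /ssyt_onP [Hsh Hrow Hcol].
have Hsh' x : (drop_max T x != None) = col_shape (shrink f (max_cols T)) x.1 x.2.
  rewrite drop_max_none Hsh /col_shape /shrink.
  case sx: (x.1 < f x.2)%N => /=; last by apply/esym/negbTE; lia.
  by rewrite (max_entryE HT sx); case: (max_cols T x.2) => /=; lia.
have sub x : col_shape (shrink f (max_cols T)) x.1 x.2 ->
    col_shape f x.1 x.2 /\ T x != Some ord_max.
  by rewrite -Hsh' drop_max_none -Hsh => /andP.
apply/ssyt_onP; split => // x y /sub [sx nx] /sub [sy ny] e1 e2; rewrite !drop_max_entry //.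
  exact: Hrow.
exact: Hcol.
Qed.

Lemma add_maxK : cancel (@add_max n f) (@drop_max n).
Proof.
move=> T; apply/ffunP => x; rewrite !ffunE; case: (T x) => [e|] /=; first by rewrite liftK.
by case: ifP => //= _; rewrite unlift_none.
Qed.

Lemma drop_maxK (T : tableau n.+1) :
  ssyt_on (col_shape f) T -> add_max f (drop_max T) = T.
Proof.
move=> /ssyt_onP [Hsh _ _]; apply/ffunP => x; rewrite !ffunE.
have := Hsh x; rewrite /col_shape; case: (T x) => [e|] /= <- //.
by case: unliftP => [j ->|->].
Qed.

Lemma add_max_ssyt t (T : tableau n) :
  strip_ok f t -> ssyt_on (col_shape (shrink f t)) T -> ssyt_on (col_shape f) (add_max f T).
Proof.
move=> /andP [_ /stepwiseP t_step] /ssyt_onP [Hsh Hrow Hcol].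
have ent x : entry (add_max f T x) =
    if T x is Some e then (e : nat) else if (x.1 < f x.2)%N then n else 0%N.
  by rewrite ffunE; case: (T x) => [e|]; [rewrite entry_lift | case: ifP].
apply/ssyt_onP; split.
- move=> x; rewrite ffunE; have := Hsh x; case: (T x) => [e|] /=; last by case: ifP.
  by move/esym; rewrite /col_shape /shrink; lia.
- move=> x y sx sy e1 e2; rewrite !ent (_ : (x.1 < f x.2)%N) // (_ : (y.1 < f y.2)%N) //.
  case Ty: (T y) => [e'|]; last by case: (T x) => [e|] //; apply: ltnW.
  have sy' : col_shape (shrink f t) y.1 y.2 by rewrite -Hsh Ty.
  have sx' : col_shape (shrink f t) x.1 x.2.
    by move: sy'; rewrite /col_shape e1 => h; apply: leq_trans h _; apply: t_step.
  have := Hrow x y sx' sy' e1 e2; rewrite Ty.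
  by move: (sx'); rewrite -Hsh; case: (T x).
- move=> x y sx sy e1 e2; rewrite !ent (_ : (x.1 < f x.2)%N) // (_ : (y.1 < f y.2)%N) //.
  case Ty: (T y) => [e'|].
    have sy' : col_shape (shrink f t) y.1 y.2 by rewrite -Hsh Ty.
    have sx' : col_shape (shrink f t) x.1 x.2.
      by move: sy'; rewrite /col_shape /shrink -(val_inj e1) e2; lia.
    have := Hcol x y sx' sy' e1 e2; rewrite Ty.
    by move: (sx'); rewrite -Hsh; case: (T x).
  have ny : ~~ col_shape (shrink f t) y.1 y.2 by rewrite -Hsh Ty.
  have sx' : col_shape (shrink f t) x.1 x.2.
    by move: ny sy; rewrite /col_shape /shrink -(val_inj e1) e2; case: (t x.2); lia.
  by move: sx'; rewrite -Hsh; case: (T x).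
Qed.

Lemma max_cols_add_max t (T : tableau n) :
  strip_ok f t -> ssyt_on (col_shape (shrink f t)) T -> max_cols (add_max f T) = t.
Proof.
move=> /andP [/forallP t_pos _] /ssyt_onP [Hsh _ _].
apply/ffunP => j; rewrite ffunE; apply/existsP/idP => [[i]|tj].
  rewrite ffunE /=; have := Hsh (i, j); rewrite /col_shape /shrink /=.
  case: (T (i, j)) => [e|] /=.
    by move=> _; rewrite (inj_eq Some_inj) eq_sym (negbTE (neq_lift _ _)).
  by case: ifP => // lt1 h _; move: h; case: (t j); lia.
have fj : (0 < f j)%N by move: (t_pos j); rewrite tj.
have lti : ((f j).-1 < R)%N by have := f_le_R j; lia.
exists (Ordinal lti); rewrite ffunE /=.
have := Hsh (Ordinal lti, j); rewrite /col_shape /shrink /= tj.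
by case: (T _) => [e|] /=; [lia | move=> _; rewrite ifT //; lia].
Qed.

Lemma card_ssyts_rec : #|ssyts n.+1 f| = (\sum_(t | strip_ok f t) #|ssyts n (shrink f t)|)%N.
Proof.
rewrite -sum1_card (partition_big (@max_cols n) (strip_ok f)); last first.
  by move=> T; rewrite inE; apply: strip_ok_max_cols.
apply: eq_bigr => t t_ok; rewrite sum1_card.
rewrite -(card_imset _ (can_inj add_maxK)); apply: eq_card => T.
rewrite unfold_in /= inE; apply/idP/idP.
  case/andP => HT /eqP tT; apply/imsetP; exists (drop_max T); last by rewrite drop_maxK.
  by rewrite inE -tT; apply: drop_max_ssyt.
case/imsetP => T'; rewrite inE => HT' ->.
by rewrite (add_max_ssyt t_ok HT') (max_cols_add_max t_ok HT') eqxx.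
Qed.

End ColumnTableaux.

Local Open Scope ring_scope.

(** * Binomial determinants and the dual Jacobi-Trudi identity *)

Lemma det_add_rows (R : comPzRingType) n (A0 A1 : 'M[R]_n) :
  \det (A0 + A1) =
  \sum_(t : {ffun 'I_n -> bool}) \det (\matrix_(i, j) (if t i then A1 i j else A0 i j)).
Proof.
rewrite /determinant; under [RHS]eq_bigr do rewrite /determinant.
rewrite exchange_big /=; apply: eq_bigr => s _; rewrite -mulr_sumr; congr (_ * _).
rewrite (eq_bigr (fun i => \sum_(b : bool) (if b then A1 i (s i) else A0 i (s i)))).
  by rewrite bigA_distr_bigA; apply: eq_bigr => t _; apply: eq_bigr => i _; rewrite !mxE.
by move=> i _; rewrite !mxE big_bool /= addrC.
Qed.

Lemma det_add_cols (R : comPzRingType) n (A0 A1 : 'M[R]_n) :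
  \det (A0 + A1) =
  \sum_(t : {ffun 'I_n -> bool}) \det (\matrix_(j, k) (if t k then A1 j k else A0 j k)).
Proof.
rewrite -det_tr linearD det_add_rows; apply: eq_bigr => t _.
by rewrite -det_tr; congr (\det _); apply/matrixP => i j; rewrite !mxE.
Qed.

Lemma det_col_eq0 (R : comPzRingType) n (A : 'M[R]_n) k : (forall j, A j k = 0) -> \det A = 0.
Proof. by move=> Ak0; rewrite (expand_det_col A k) big1 // => i _; rewrite Ak0 mul0r. Qed.

Lemma det_col_alternate (R : comPzRingType) n (A : 'M[R]_n) k k' :
  k != k' -> (forall j, A j k = A j k') -> \det A = 0.
Proof.
by move=> nkk' Akk'; rewrite -det_tr; apply: (determinant_alternate nkk') => j; rewrite !mxE.
Qed.

Definition bin_diff n U s := if (s <= U)%N then 'C(n, U - s) else 0%N.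

Lemma bin_diffS n U s :
  bin_diff n.+1 U s = (bin_diff n U s + (if U is U'.+1 then bin_diff n U' s else 0))%N.
Proof.
rewrite /bin_diff; case: U => [|U]; first by case: s => [|s] //=; rewrite !bin0.
case: (leqP s U) => [le|gt]; first by rewrite (leq_trans le (leqnSn _)) subSn // binS.
case: (eqVneq s U.+1) => [->|ne]; first by rewrite leqnn subnn !bin0.
by rewrite !ifF //; apply/negbTE; rewrite -ltnNge //; lia.
Qed.

Definition binom_mx n L (U : 'I_L -> nat) : 'M[rat]_L :=
  \matrix_(j, k) (bin_diff n (U k) (L.-1 - j))%:R.

Lemma det_binom_mx_eq0 n L (U : 'I_L -> nat) k :
  (n + L.-1 < U k)%N -> \det (binom_mx n U) = 0.
Proof.
move=> big_Uk; apply: (det_col_eq0 (k := k)) => j; rewrite mxE /bin_diff.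
by case: ifP => // _; rewrite bin_small //; have := ltn_ord j; lia.
Qed.

Definition stair L (a : nat -> nat) k := (a k + (L.-1 - k))%N.

Lemma det_binom_mx_stair n L : \det (binom_mx n (fun k : 'I_L => stair L (fun=> 0%N) k)) = 1.
Proof.
rewrite det_trig; first by rewrite big1 // => k _; rewrite mxE /bin_diff /stair leqnn subnn bin0.
apply/forallP => i; apply/forallP => j; apply/implyP => lt_ij.
by rewrite mxE /bin_diff /stair ifF //; apply/negbTE; have := ltn_ord j; lia.
Qed.

Lemma det_binom_mx_stair_eq0 n L c a : (0 < L)%N -> (n < c + a 0%N)%N ->
  \det (binom_mx n (fun k : 'I_L => c + stair L a k)%N) = 0.
Proof.
by move=> L_gt0 lt_n; apply: (det_binom_mx_eq0 (k := Ordinal L_gt0)); rewrite /stair /=; lia.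
Qed.

Definition unstair L (U : 'I_L -> nat) k := (U k - (L.-1 - k))%N.

Lemma stepwise_ltn_gap L (U : 'I_L -> nat) :
  stepwise ltn U -> forall k k' : 'I_L, (k <= k')%N -> (U k' + (k' - k) <= U k)%N.
Proof.
move/stepwiseP => U_step k k' /subnKC; move: (k' - k)%N => d.
elim: d k' => [|d IH] k' e.
  by rewrite addn0 (_ : k' = k) //; apply: val_inj; rewrite /= -e addn0.
have lt_k'L : (k + d < L)%N by have := ltn_ord k'; lia.
have := IH (Ordinal lt_k'L) erefl.
by have := U_step (Ordinal lt_k'L) k' (etrans (esym e) (addnS _ _)) => /=; lia.
Qed.

Lemma stepwise_ltn_stair L (U : 'I_L -> nat) :
  stepwise ltn U -> forall k : 'I_L, (L.-1 - k <= U k)%N.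
Proof.
move=> sU k; have lt_last : (L.-1 < L)%N by have := ltn_ord k; lia.
have le_k_last : (k <= L.-1)%N by have := ltn_ord k; lia.
by have := stepwise_ltn_gap sU (k' := Ordinal lt_last) le_k_last; rewrite /=; lia.
Qed.

Lemma unstair_nonincr L (U : 'I_L -> nat) : stepwise ltn U -> stepwise leq (unstair U).
Proof.
move=> sU; have := stepwise_ltn_stair sU; move/stepwiseP: sU => sU stair.
apply/stepwiseP => k k' e; rewrite /unstair.
by have := sU k k' e; have := stair k; have := stair k'; have := ltn_ord k'; lia.
Qed.

Lemma strip_ok_unstair L (U : 'I_L -> nat) t : stepwise ltn U ->
  strip_ok (unstair U) t = [forall k, t k ==> (0 < U k)%N] && stepwise ltn (fun k => U k - t k)%N.
Proof.
move=> sU; have stair := stepwise_ltn_stair sU.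
apply/idP/idP => [/andP [/forallP t_pos /stepwiseP t_step] | /andP [/forallP t_pos st]].
  apply/andP; split.
    apply/forallP => k; apply/implyP => tk; move: (t_pos k); rewrite tk /unstair /=; lia.
  apply/stepwiseP => k k' e; move: (t_pos k) (t_pos k') (t_step k k' e); rewrite /shrink /unstair.
  by have := stair k; have := stair k'; have := ltn_ord k'; case: (t k); case: (t k') => /=; lia.
have stair_t := stepwise_ltn_stair st; move/stepwiseP: st => t_step.
apply/andP; split.
  apply/forallP => k; apply/implyP => tk; move: (stair_t k) (t_pos k); rewrite tk /unstair /=.
  by have := ltn_ord k; lia.
apply/stepwiseP => k k' e; have := t_step k k' e; rewrite /shrink /unstair.
by have := stair_t k; have := stair_t k'; have := ltn_ord k'; case: (t k); case: (t k') => /=; lia.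
Qed.

(* Pascal's rule splits every column; the column choices [t] that are not strips yield a zero
   column or two equal columns. *)
Lemma det_binom_mx_rec n L (U : 'I_L -> nat) : stepwise ltn U ->
  \det (binom_mx n.+1 U) =
  \sum_(t | strip_ok (unstair U) t) \det (binom_mx n (fun k => U k - t k)%N).
Proof.
move=> sU.
have -> : binom_mx n.+1 U = binom_mx n U +
    \matrix_(j, k) (if U k is U'.+1 then bin_diff n U' (L.-1 - j) else 0%N)%:R.
  by apply/matrixP => j k; rewrite !mxE bin_diffS natrD; case: (U k).
rewrite det_add_cols (bigID (fun t => strip_ok (unstair U) t)) /= [X in _ + X]big1 ?addr0.
  apply: eq_bigr => t; rewrite strip_ok_unstair // => /andP [/forallP t_pos _].
  congr (\det _); apply/matrixP => j k; rewrite !mxE.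
  by move: (t_pos k); case: (t k) => /=; [case: (U k) => // U' _; rewrite subn1 | rewrite subn0].
move=> t; rewrite strip_ok_unstair // negb_and.
case: (boolP [forall k, t k ==> (0 < U k)%N]) => [/forallP t_pos | ]; last first.
  rewrite negb_forall => /existsP [k]; rewrite negb_imply -eqn0Ngt => /andP [tk /eqP Uk0] _.
  by apply: (det_col_eq0 (k := k)) => j; rewrite !mxE tk Uk0.
rewrite /= /stepwise negb_forall => /existsP [k]; rewrite negb_forall => /existsP [k'].
rewrite negb_imply -leqNgt => /andP [/eqP e le].
have lt := (stepwiseP _ _ sU) k k' e.
have nkk' : k != k' by apply/eqP => ekk'; rewrite ekk' in e; lia.
apply: (det_col_alternate nkk') => j; rewrite !mxE.
move: le (t_pos k'); case: (t k); case: (t k'); move: lt; case: (U k) => [|u] //=; try lia.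
by move=> lt le; rewrite (_ : U k' = u) //; lia.
Qed.

Lemma det_binom_mx_card n R L (U : 'I_L -> nat) :
  stepwise ltn U -> (forall k, (unstair U k <= R)%N) ->
  \det (binom_mx n U) = #|ssyts R n (unstair U)|%:R.
Proof.
elim: n U => [|n IH] U sU le_R; last first.
  rewrite det_binom_mx_rec // (card_ssyts_rec n le_R (unstair_nonincr sU)) natr_sum.
  apply: eq_bigr => t; rewrite strip_ok_unstair // => /andP [_ st].
  rewrite IH //; last by move=> k; apply: leq_trans (le_R k); rewrite /unstair; lia.
  rewrite (@eq_ssyts _ _ _ _ (shrink (unstair U) t)) // => k.
  by rewrite /unstair /shrink; case: (t k); lia.
have stair := stepwise_ltn_stair sU.
case: (boolP [forall k, unstair U k == 0%N]) => [/forallP flat | ].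
  have -> : binom_mx 0 U = 1%:M.
    apply/matrixP => j k; rewrite !mxE /bin_diff bin0n.
    have /eqP Uk := flat k; rewrite /unstair in Uk.
    case: (eqVneq j k) => [-> | /eqP njk]; first by rewrite ifT ?Uk // stair.
    case: ifP => // le; rewrite (_ : (_ == 0)%N = false) //; apply/negbTE/eqP => e.
    by apply: njk; apply: ord_inj; have := stair k; have := ltn_ord j; have := ltn_ord k; lia.
  have -> : ssyts R 0 (unstair U) = setT.
    apply/setP => T; rewrite !inE; apply/ssyt_onP; split => [x|x y|x y];
      by rewrite /col_shape (eqP (flat x.2)) //; case: (T x) => [[]|].
  by rewrite det1 cardsT card_ffun card_option card_ord exp1n.
rewrite negb_forall => /existsP [k nk].
have R_gt0 : (0 < R)%N by have := le_R k; lia.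
have L_gt0 : (0 < L)%N by have := ltn_ord k; lia.
have -> : #|ssyts R 0 (unstair U)| = 0%N.
  apply/eqP; rewrite cards_eq0; apply/eqP/setP => T; rewrite !inE.
  apply/negP => /ssyt_onP [Hsh _ _]; have := Hsh (Ordinal R_gt0, k).
  by rewrite /col_shape /=; case: (T _) => [[]|] //; rewrite lt0n nk.
apply: (det_binom_mx_eq0 (k := Ordinal L_gt0)) => /=.
have := stepwise_ltn_gap sU (k := Ordinal L_gt0) (k' := k) isT.
by have := stair k; move: nk; rewrite /unstair /=; lia.
Qed.

Lemma sorted_geq_nth (mu : seq nat) i j :
  sorted geq mu -> (i <= j)%N -> (nth 0%N mu j <= nth 0%N mu i)%N.
Proof.
move=> Smu le_ij; case: (ltnP j (size mu)) => [lt_j | ge_j]; last by rewrite nth_default.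
by apply: (sorted_leq_nth (rev_trans leq_trans) leqnn) => //; rewrite inE //; lia.
Qed.

Lemma count_gtn_sorted (mu : seq nat) i j :
  sorted geq mu -> (j < count (fun p => i < p) mu)%N = (i < nth 0%N mu j)%N.
Proof.
elim: mu j => [|x s IH] j Sxs; first by rewrite nth_nil.
have Ss : sorted geq s := path_sorted Sxs.
have le_x k : (nth 0%N s k <= x)%N := sorted_geq_nth Sxs (leq0n k.+1).
rewrite /=; case: (ltnP i x) => ix; first by case: j => [|j] //=; rewrite add1n ltnS IH.
have -> : count (fun p => i < p)%N s = 0%N.
  by apply/eqP; rewrite -leqn0 leqNgt (IH 0%N Ss) -leqNgt (leq_trans (le_x 0%N) ix).
by case: j => [|j] /=; apply/esym/negbTE; rewrite -leqNgt // (leq_trans (le_x j) ix).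
Qed.

Lemma head_conj_part (mu : seq nat) : is_partition mu -> head 0%N (conj_part mu) = size mu.
Proof.
case: mu => [|x s] //= /andP [_ /andP [x_gt0 /allP s_gt0]].
rewrite /conj_part /=; case: x x_gt0 => // x _ /=.
by rewrite (@eq_in_count _ _ predT) ?count_predT // => p /s_gt0.
Qed.

Lemma schur_ones_det gamma (mu : seq nat) : is_partition mu ->
  schur (conj_part mu) (fun _ : 'I_gamma => 1 : rat) =
  \det (binom_mx gamma (fun k : 'I_(size mu) => stair (size mu) (nth 0%N mu) k)).
Proof.
move=> Pmu; have /andP [Smu _] := Pmu.
rewrite -(head_conj_part Pmu); set lam := conj_part mu.
have size_lam : size lam = head 0%N mu by rewrite size_map size_iota.
rewrite (@det_binom_mx_card _ (size lam)); first last.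
- move=> k; rewrite /unstair /stair size_lam.
  have := sorted_geq_nth Smu (leq0n k); rewrite (_ : nth 0%N mu 0 = head 0%N mu); first lia.
  by case: (mu).
- apply/stepwiseP => k k' e; have := sorted_geq_nth Smu (leqnSn k); rewrite /stair e.
  by have := ltn_ord k'; lia.
rewrite (@eq_ssyts _ _ _ _ (fun k => nth 0%N mu k)); last by move=> k; rewrite /unstair /stair; lia.
rewrite /schur (eq_bigr (fun _ => 1)) => [|T _]; last by rewrite big1 // => c _; case: (T c).
rewrite -sum1_card natr_sum; apply: eq_bigl => T; rewrite inE.
change (ssyt_on (fun (i : 'I_(size lam)) (j : 'I_(head 0%N lam)) => in_shape lam i j) T =
        ssyt_on (col_shape (fun k : 'I_(head 0%N lam) => nth 0%N mu k)) T).
apply: eq_ssyt_on => i j; have lt_i : (i < head 0%N mu)%N by rewrite -size_lam.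
rewrite /in_shape /col_shape /lam /conj_part (nth_map 0%N) ?size_iota // nth_iota //.
by rewrite count_gtn_sorted.
Qed.

(** * Evaluation of binomial determinants *)

Definition vdm L (h : nat -> nat) : rat :=
  \prod_(0 <= i < L) \prod_(i.+1 <= j < L) ((h j)%:R - (h i)%:R).

Definition fact_wt n L (h : nat -> nat) : rat :=
  \prod_(0 <= k < L) ((h k)`! * (n + L.-1 - h k)`!)%:R.

Definition vdm_quot n L h := vdm L h / fact_wt n L h.

Lemma vdmE L h : vdm L h = \prod_(i < L) \prod_(j < L | (i < j)%N) ((h j)%:R - (h i)%:R).
Proof.
rewrite /vdm big_mkord; apply: eq_bigr => i _.
rewrite -(big_mkord (fun j => (i < j)%N) (fun j => (h j)%:R - (h i)%:R)).
rewrite [RHS](@big_cat_nat _ _ _ i.+1) //= [X in _ = X * _]big1_seq ?mul1r => [|j]; last first.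
  by rewrite mem_index_iota => /andP [lt_ij /andP [_ le_ji]]; exfalso; lia.
rewrite big_nat_cond [RHS]big_nat_cond; apply: eq_bigl => j.
by case/boolP: (i.+1 <= j < L)%N => //= /andP [lt_ij _]; rewrite lt_ij.
Qed.

Lemma fact_neq0 m : (m`!)%:R != 0 :> rat.
Proof. by rewrite pnatr_eq0 -lt0n fact_gt0. Qed.

Lemma fact_wt_neq0 n L h : fact_wt n L h != 0.
Proof. by rewrite prodf_seq_neq0; apply/allP => k _ /=; rewrite natrM mulf_neq0 ?fact_neq0. Qed.

Lemma vdm_neq0 L h : (forall i j, (i < j < L)%N -> h j != h i) -> vdm L h != 0.
Proof.
move=> h_inj; rewrite prodf_seq_neq0; apply/allP => i _ /=.
rewrite prodf_seq_neq0; apply/allP => j; rewrite mem_index_iota => /andP [lt_ij lt_jL] /=.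
by rewrite subr_eq0 eqr_nat h_inj // lt_ij.
Qed.

Lemma natr_ffact m s : (m ^_ s)%:R = \prod_(i < s) (m%:R - i%:R) :> rat.
Proof.
elim: s => [|s IH]; first by rewrite big_ord0.
rewrite ffactnSr big_ord_recr /= natrM -IH.
by case: (leqP s m) => le_sm; [rewrite natrB | rewrite ffact_small // !mul0r].
Qed.

Definition ffact_poly n L s : {poly rat} :=
  \prod_(i < s) ('X - i%:R%:P) * \prod_(i < L.-1 - s) ((n + L.-1)%:R%:P - i%:R%:P - 'X).

Lemma size_ffact_poly n L s : (s < L)%N -> (size (ffact_poly n L s) <= L)%N.
Proof.
have size_lin c d : size (c%:P - d%:P - 'X : {poly rat}) = 2%N.
  by rewrite -polyCB -(opprB 'X) size_polyN size_XsubC.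
move=> le_s; apply: leq_trans (size_mul_leq _ _) _.
rewrite !size_prod => [|i _|i _]; last by rewrite -size_poly_eq0 size_XsubC.
  rewrite (eq_bigr (fun _ => 2%N) (fun i _ => size_XsubC _)).
  rewrite (eq_bigr (fun _ => 2%N) (fun i _ => size_lin _ _)).
  by rewrite !sum_nat_const !card_ord; lia.
by rewrite -size_poly_eq0 size_lin.
Qed.

Lemma horner_ffact_poly n L s u : (u <= n + L.-1)%N ->
  (ffact_poly n L s).[u%:R] = (u ^_ s * (n + L.-1 - u) ^_ (L.-1 - s))%:R.
Proof.
move=> le_u; rewrite hornerM !horner_prod natrM !natr_ffact; congr (_ * _).
  by apply: eq_bigr => i _; rewrite hornerXsubC.
by apply: eq_bigr => i _; rewrite !hornerE natrB // addrAC.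
Qed.

Lemma bin_diff_fact n L u s : (u <= n + L.-1)%N -> (s <= L.-1)%N ->
  (bin_diff n u s * (u`! * (n + L.-1 - u)`!) = n`! * (u ^_ s * (n + L.-1 - u) ^_ (L.-1 - s)))%N.
Proof.
rewrite /bin_diff => le_u le_s; case: (leqP s u) => le_su; last first.
  by rewrite (ffact_small le_su) mul0n muln0.
case: (leqP (u - s) n) => le_n; last first.
  by rewrite bin_small // (@ffact_small _ (L.-1 - s)) ?muln0 //; lia.
rewrite -{1}(ffact_fact le_su) -{1}(@ffact_fact (n + L.-1 - u) (L.-1 - s)); last by lia.
rewrite (_ : n + L.-1 - u - (L.-1 - s) = n - (u - s))%N; last by lia.
by rewrite -(bin_fact le_n); ring.
Qed.

(* Rescaling column k by u_k! (n+L-1-u_k)! turns row j into the values at the u_k of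
   n! * ffact_poly n L (L-1-j), a polynomial of degree < L. *)
Lemma det_binom_mx_vdm n L : exists c : rat, forall u : nat -> nat,
  (forall k, (k < L)%N -> (u k <= n + L.-1)%N) ->
  \det (binom_mx n (fun k : 'I_L => u k)) * fact_wt n L u = c * vdm L u.
Proof.
pose Cm : 'M[rat]_L := \matrix_(j, m) (ffact_poly n L (L.-1 - j))`_m.
exists ((n`!)%:R ^+ L * \det Cm) => u le_u.
have E : binom_mx n (fun k : 'I_L => u k) *m diag_mx (\row_k ((u k)`! * (n + L.-1 - u k)`!)%:R) =
    (n`!)%:R *: (Cm *m Vandermonde L (\row_k (u k)%:R)).
  apply/matrixP => j k; rewrite mul_mx_diag !mxE.
  have le_j : (L.-1 - j < L)%N by have := ltn_ord j; lia.
  rewrite (_ : \sum_m _ = (ffact_poly n L (L.-1 - j)).[(u k)%:R]); last first.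
    rewrite (horner_coef_wide _ (size_ffact_poly n le_j)).
    by apply: eq_bigr => m _; rewrite !mxE.
  by rewrite horner_ffact_poly ?le_u // -!natrM bin_diff_fact ?le_u ?leq_subr.
move: (congr1 determinant E); rewrite det_mulmx det_diag detZ det_mulmx det_Vandermonde.
have -> : \prod_(i < L) (\row_k ((u k)`! * (n + L.-1 - u k)`!)%:R) 0 i = fact_wt n L u.
  by rewrite /fact_wt big_mkord; apply: eq_bigr => i _; rewrite mxE.
move=> ->; rewrite vdmE mulrA; congr (_ * _).
by apply: eq_bigr => i _; apply: eq_bigr => j _; rewrite !mxE.
Qed.

Lemma det_binom_mx_ratio n L (u v : nat -> nat) :
  (forall k, (k < L)%N -> (u k <= n + L.-1)%N) -> (forall k, (k < L)%N -> (v k <= n + L.-1)%N) ->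
  \det (binom_mx n (fun k : 'I_L => u k)) * vdm_quot n L v =
  \det (binom_mx n (fun k : 'I_L => v k)) * vdm_quot n L u.
Proof.
have [c factor] := det_binom_mx_vdm n L; move=> le_u le_v.
apply: (mulIf (mulf_neq0 (fact_wt_neq0 n L u) (fact_wt_neq0 n L v))); rewrite /vdm_quot.
transitivity (c * vdm L u * vdm L v).
  by rewrite -(factor u le_u); field; apply: fact_wt_neq0.
by rewrite mulrAC -(factor v le_v); field; rewrite !fact_wt_neq0.
Qed.

Lemma det_binom_mx_stair_ratio n L c a : (forall k, (c + a k <= n)%N) ->
  \det (binom_mx n (fun k : 'I_L => c + stair L a k)%N) *
    vdm_quot n L (fun k => c + stair L (fun=> 0%N) k)%N =
  \det (binom_mx n (fun k : 'I_L => c + stair L (fun=> 0%N) k)%N) *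
    vdm_quot n L (fun k => c + stair L a k)%N.
Proof.
move=> le_a; apply: det_binom_mx_ratio => k _.
  by have := le_a k; rewrite /stair; lia.
by have := le_a 0%N; rewrite /stair; lia.
Qed.

Lemma vdm_quot_stair0_neq0 n L c : vdm_quot n L (fun k => c + stair L (fun=> 0%N) k)%N != 0.
Proof.
by rewrite mulf_neq0 ?invr_neq0 ?fact_wt_neq0 // vdm_neq0 // => i j; rewrite /stair; lia.
Qed.

(** * From N columns to l(mu) columns *)

Lemma vdm_split L L' h : (L <= L')%N ->
  vdm L' h = vdm L h * \prod_(0 <= i < L) \prod_(L <= j < L') ((h j)%:R - (h i)%:R) *
             \prod_(L <= i < L') \prod_(i.+1 <= j < L') ((h j)%:R - (h i)%:R).
Proof.
move=> le_LL'; rewrite /vdm (@big_cat_nat _ _ _ L) //= -big_split; congr (_ * _).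
by apply: eq_big_nat => i /andP [_ lt_iL]; rewrite (@big_cat_nat _ _ _ L).
Qed.

Lemma vdm_shift L h1 h2 c : (forall k, (k < L)%N -> h1 k = (h2 k + c)%N) -> vdm L h1 = vdm L h2.
Proof.
move=> e; apply: eq_big_nat => i /andP [_ lt_iL]; apply: eq_big_nat => j /andP [_ lt_jL].
by rewrite !e // !natrD; ring.
Qed.

Lemma fact_mul_rising x k M N : (k < M <= N)%N ->
  ((x + (M.-1 - k))`! * \prod_(M <= j < N) (x + j - k))%N = (x + (N.-1 - k))`!.
Proof.
case/andP=> lt_kM; elim: N => [|N IH]; first lia.
rewrite leq_eqVlt ltnS => /predU1P [<- | le_MN]; first by rewrite big_geq ?muln1.
rewrite big_nat_recr // mulnA IH //= (_ : x + (N - k) = (x + (N.-1 - k)).+1)%N; last by lia.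
by rewrite factS mulnC; congr (_ * _)%N; lia.
Qed.

Section StairShift.
Variables (g d M N : nat).
Hypothesis le_MN : (M <= N)%N.

Definition fact_ratio (a : nat -> nat) : rat :=
  \prod_(0 <= k < M) ((stair N a k)`!%:R / (d + stair N a k)`!%:R).

Lemma cross_stair a k : (forall j, (M <= j)%N -> a j = 0%N) -> (k < M)%N ->
  \prod_(M <= j < N) ((d + stair N a j)%:R - (d + stair N a k)%:R) /
    ((d + stair N a k)`! * (g + d + N.-1 - (d + stair N a k))`!)%:R =
  (-1) ^+ (N - M) * ((stair N a k)`!%:R / (d + stair N a k)`!%:R) /
    ((stair M a k)`! * (g + M.-1 - stair M a k)`!)%:R :> rat.
Proof.
move=> a0 lt_kM; rewrite /stair.
have -> : \prod_(M <= j < N) ((d + (a j + (N.-1 - j)))%:R - (d + (a k + (N.-1 - k)))%:R) =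
    (-1) ^+ (N - M) * (\prod_(M <= j < N) (a k + j - k))%N%:R :> rat.
  rewrite natr_prod -prodr_const_nat -big_split; apply: eq_big_nat => j /andP [le_Mj lt_jN].
  by rewrite a0 //= mulN1r -opprB -natrB; [congr (- _%:R); lia | lia].
rewrite -(@fact_mul_rising (a k) k M N) ?lt_kM //.
rewrite (_ : g + d + N.-1 - (d + (a k + (N.-1 - k))) = g + M.-1 - (a k + (M.-1 - k)))%N.
  by rewrite !natrM; field; rewrite !fact_neq0.
by lia.
Qed.

Let h0 k := (d + (N.-1 - k))%N.
Let wN k := ((h0 k)`! * (g + d + N.-1 - h0 k)`!)%:R : rat.

Definition stair_tail : rat := \prod_(0 <= k < M) (-1) ^+ (N - M) *
  (\prod_(M <= i < N) \prod_(i.+1 <= j < N) ((h0 j)%:R - (h0 i)%:R)) / \prod_(M <= k < N) wN k.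

(* Beyond M the exponents [d + stair N a] do not depend on [a], on [0, M) they are those of
   [stair M a] shifted by d + N - M, and the cross factors are the ratios of [cross_stair]. *)
Lemma vdm_quot_stair a : (forall k, (M <= k)%N -> a k = 0%N) ->
  vdm_quot (g + d) N (fun k => d + stair N a k)%N =
  stair_tail * (vdm_quot g M (stair M a) * fact_ratio a).
Proof.
move=> a0; set u := fun k => (d + stair N a k)%N.
have u_tail k : (M <= k)%N -> u k = h0 k by move=> le_Mk; rewrite /u /stair a0.
have wt_split : fact_wt (g + d) N u =
    \prod_(0 <= k < M) ((u k)`! * (g + d + N.-1 - u k)`!)%:R * \prod_(M <= k < N) wN k.
  rewrite /fact_wt (@big_cat_nat _ _ _ M) //=; congr (_ * _).
  by apply: eq_big_nat => k /andP [le_Mk _]; rewrite u_tail.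
have tail_eq : \prod_(M <= i < N) \prod_(i.+1 <= j < N) ((u j)%:R - (u i)%:R) =
    \prod_(M <= i < N) \prod_(i.+1 <= j < N) ((h0 j)%:R - (h0 i)%:R) :> rat.
  apply: eq_big_nat => i /andP [le_Mi _]; apply: eq_big_nat => j /andP [lt_ij _].
  by rewrite !u_tail //; lia.
rewrite /vdm_quot wt_split (vdm_split _ le_MN) tail_eq.
rewrite (vdm_shift (h2 := stair M a) (c := d + (N - M))); last first.
  by move=> k lt_kM; rewrite /u /stair; lia.
set X := \prod_(0 <= i < M) _; set Wh := \prod_(0 <= k < M) _.
set T := \prod_(M <= i < N) _; set Wt := \prod_(M <= k < N) wN k.
have cross : X / Wh = \prod_(0 <= k < M) (-1) ^+ (N - M) * fact_ratio a / fact_wt g M (stair M a).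
  rewrite /X /Wh /fact_wt -prodf_div /fact_ratio -big_split -prodf_div.
  by apply: eq_big_nat => k /andP [_ lt_kM]; apply: cross_stair.
have Wh_neq0 : Wh != 0.
  by rewrite prodf_seq_neq0; apply/allP => k _ /=; rewrite natrM mulf_neq0 ?fact_neq0.
have Wt_neq0 : Wt != 0.
  by rewrite prodf_seq_neq0; apply/allP => k _ /=; rewrite /wN natrM mulf_neq0 ?fact_neq0.
have -> : stair_tail = \prod_(0 <= k < M) (-1) ^+ (N - M) * T / Wt by [].
clearbody X Wh T Wt.
transitivity (vdm M (stair M a) * (T / Wt) * (X / Wh)); first by field; rewrite Wh_neq0 Wt_neq0.
by rewrite cross; field; rewrite Wt_neq0 fact_wt_neq0.
Qed.

End StairShift.

Lemma det_binom_mx_stair_factor g d M N a :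
  (M <= N)%N -> (forall k, (a k <= g)%N) -> (forall k, (M <= k)%N -> a k = 0%N) ->
  \det (binom_mx (g + d) (fun k : 'I_N => d + stair N a k)%N) =
  \det (binom_mx (g + d) (fun k : 'I_N => d + stair N (fun=> 0%N) k)%N) *
  (fact_ratio d M N (fun=> 0%N))^-1 * \det (binom_mx g (fun k : 'I_M => stair M a k)) *
  fact_ratio d M N a.
Proof.
move=> le_MN le_a a_tail.
have le_da k : (d + a k <= g + d)%N by rewrite addnC leq_add2r.
have ratio_N := @det_binom_mx_stair_ratio (g + d) N d a le_da.
have ratio_M : \det (binom_mx g (fun k : 'I_M => stair M a k)) *
    vdm_quot g M (stair M (fun=> 0%N)) = vdm_quot g M (stair M a).
  by have := @det_binom_mx_stair_ratio g M 0 a le_a; rewrite det_binom_mx_stair mul1r.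
have P0_neq0 : fact_ratio d M N (fun=> 0%N) != 0.
  by rewrite prodf_seq_neq0; apply/allP => k _; rewrite mulf_neq0 ?invr_neq0 ?fact_neq0.
apply: (mulIf (vdm_quot_stair0_neq0 (g + d) N d)); rewrite ratio_N.
rewrite (vdm_quot_stair g d le_MN a_tail) (vdm_quot_stair g d le_MN (a := fun=> 0%N)) //.
by rewrite -ratio_M; field.
Qed.

(** * The Barnes G-function and the Toeplitz determinants *)

Lemma barnesG_split x M : barnesG (x + M).+1 = (barnesG x.+1 * \prod_(k < M) ((x + M).-1 - k)`!)%N.
Proof.
elim: M => [|M IH]; first by rewrite addn0 big_ord0 muln1.
rewrite /barnesG /= in IH *; rewrite addnS big_ord_recr /= IH big_ord_recl /= subn0 -!mulnA.
congr (_ * _)%N; rewrite mulnC; congr (_ * _)%N.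
by apply: eq_bigr => k _; congr (_`!); rewrite /bump /=; lia.
Qed.

Lemma barnesG_neq0 n : (barnesG n)%:R != 0 :> rat.
Proof. by rewrite pnatr_eq0 -lt0n prodn_gt0 // => i; rewrite fact_gt0. Qed.

Lemma barnesG_quot d M N : (M <= N)%N ->
  (barnesG (N - M).+1)%:R / (barnesG N.+1)%:R *
  ((barnesG (d + N).+1)%:R / (barnesG (d + N - M).+1)%:R) = (fact_ratio d M N (fun=> 0%N))^-1.
Proof.
move=> le_MN; have := barnesG_split (N - M) M; rewrite subnK // => ->.
have := barnesG_split (d + N - M) M; rewrite subnK; last by lia.
move=> ->; rewrite !natrM.
have := barnesG_neq0 (N - M).+1; have := barnesG_neq0 (d + N - M).+1.
set B1 := (barnesG (N - M).+1)%:R; set B2 := (barnesG (d + N - M).+1)%:R => B2_neq0 B1_neq0.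
rewrite /fact_ratio /stair big_mkord prodf_div !natr_prod.
have -> : \prod_(k < M) (0 + (N.-1 - k))`!%:R = \prod_(k < M) (N.-1 - k)`!%:R :> rat by [].
have -> : \prod_(k < M) (d + (0 + (N.-1 - k)))`!%:R = \prod_(k < M) ((d + N).-1 - k)`!%:R :> rat.
  by apply: eq_bigr => k _; congr (_`!%:R); have := ltn_ord k; lia.
set P := \prod_(k < M) (N.-1 - k)`!%:R; set Q := \prod_(k < M) ((d + N).-1 - k)`!%:R.
have P_neq0 : P != 0 by rewrite prodf_seq_neq0; apply/allP => k _; apply: fact_neq0.
have Q_neq0 : Q != 0 by rewrite prodf_seq_neq0; apply/allP => k _; apply: fact_neq0.
by field; rewrite P_neq0 Q_neq0 B1_neq0 B2_neq0.
Qed.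

Lemma phi_coef_bin_diff g d (m : int) U s : d%:Z + m = U%:Z - s%:Z ->
  phi_coef g d m = (bin_diff (g + d) U s)%:R.
Proof.
move=> e; rewrite /phi_coef /bin_diff; case: (leqP s U) => le_sU; last first.
  by rewrite (_ : (- (d%:Z) <= m) = false) //; apply/negbTE; rewrite -ltNge; lia.
rewrite (_ : (- (d%:Z) <= m) = true); last by apply/idP; lia.
rewrite (_ : absz (d%:Z + m) = (U - s)%N); last by rewrite e; lia.
by case: ifP => // /negbT; rewrite -ltNge => lt_gm; rewrite bin_small //; lia.
Qed.

Lemma toeplitzD_mu_binom N (mu : seq nat) g d :
  toeplitzD_mu N mu (phi_coef g d) =
  \det (binom_mx (g + d) (fun k : 'I_N => d + stair N (nth 0%N mu) k)%N).
Proof.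
rewrite /toeplitzD_mu; congr (\det _); apply/matrixP => j k; rewrite !mxE.
by apply: phi_coef_bin_diff; rewrite /stair; have := ltn_ord j; have := ltn_ord k; lia.
Qed.

Lemma toeplitzD_binom N g d :
  toeplitzD N (phi_coef g d) =
  \det (binom_mx (g + d) (fun k : 'I_N => d + stair N (fun=> 0%N) k)%N).
Proof.
have -> : toeplitzD N (phi_coef g d) = toeplitzD_mu N [::] (phi_coef g d).
  by congr (\det _); apply/matrixP => j k; rewrite !mxE nth_nil addr0.
by rewrite toeplitzD_mu_binom; congr (\det _); apply/matrixP => j k; rewrite !mxE /stair nth_nil.
Qed.

Lemma fact_ratio_nth d M N (a : nat -> nat) :
  \prod_(k < M) ((a k + (N - k.+1))`!%:R / (d + a k + (N - k.+1))`!%:R) = fact_ratio d M N a :> rat.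
Proof.
rewrite /fact_ratio big_mkord; apply: eq_bigr => k _.
by rewrite /stair addnA (_ : N - k.+1 = N.-1 - k)%N //; lia.
Qed.

Unset Implicit Arguments.

Theorem mainTheorem7 (gamma delta : nat) (mu : seq nat) (N : nat) :
  (0 < gamma)%N -> (0 < delta)%N -> is_partition mu -> (size mu <= N)%N ->
  toeplitzD_mu N mu (phi_coef gamma delta) =
  toeplitzD N (phi_coef gamma delta)
  * ((barnesG (N - size mu).+1)%:R / (barnesG N.+1)%:R)
  * ((barnesG (delta + N).+1)%:R / (barnesG (delta + N - size mu).+1)%:R)
  * schur (conj_part mu) (fun _ : 'I_gamma => 1 : rat)
  * \prod_(k < size mu)
      (((nth 0%N mu k + (N - k.+1))`!)%:R / ((delta + nth 0%N mu k + (N - k.+1))`!)%:R).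
Proof.
move=> _ _ Pmu le_MN; have /andP [Smu _] := Pmu.
set M := size mu in le_MN *; set a := nth 0%N mu.
have head_a : a 0%N = head 0%N mu by rewrite /a; case: (mu).
rewrite toeplitzD_binom toeplitzD_mu_binom schur_ones_det // fact_ratio_nth.
case: (leqP (head 0%N mu) gamma) => [le_head | lt_head]; last first.
  have M_gt0 : (0 < M)%N by move: lt_head; rewrite /M; case: (mu).
  rewrite (@det_binom_mx_stair_eq0 _ _ 0 a M_gt0) ?head_a ?mulr0 ?mul0r //.
  rewrite det_binom_mx_stair_eq0 ?mul0r //; first exact: leq_trans M_gt0 le_MN.
  by rewrite -/a head_a; lia.
have le_a k : (a k <= gamma)%N.
  by apply: leq_trans (sorted_geq_nth Smu (leq0n k)) _; rewrite -/a head_a.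
rewrite (det_binom_mx_stair_factor delta le_MN le_a (fun k => @nth_default _ 0%N mu k)).
by rewrite -(mulrA _ _ ((barnesG (delta + N).+1)%:R / _)) barnesG_quot.
Qed.
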